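(* Let $u\geq 1$ and $r\geq 2$ be integers. For every non-negative integer $n$, $\alpha_u^{(r)}(n)=\beta_u^{(r)}(n)$.
   Context: A partition of $n$ is a non-increasing finite sequence of positive integers (parts) summing to $n$. $\mathcal O(n;r,1)$ denotes the set of partitions of $n$ in which exactly one distinct part value is divisible by $r$ (this part may be repeated). $\mathcal O_u(n;r,1)$ is the set of $\lambda\in\mathcal O(n;r,1)$ such that the unique part value divisible by $r$ occurs exactly $u$ times. $\mathcal D(n;r,1)$ denotes the set of partitions of $n$ in which exactly one part value occurs at least $r$ times. $\mathcal D_u(n;r,1)$ is the set of $\lambda\in\mathcal D(n;r,1)$ such that the unique part value occurring at least $r$ times equals $u$. Set $\alpha_u^{(r)}(n)=|\mathcal O_u(n;r,1)|$ and $\beta_u^{(r)}(n)=|\mathcal D_u(n;r,1)|$. *)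

From mathcomp Require Import all_boot.
Set Implicit Arguments. Unset Strict Implicit. Unset Printing Implicit Defensive.

Definition is_partition (n : nat) (s : seq nat) : bool :=
  [&& sorted geq s, all (fun x => 0 < x) s & sumn s == n].

(* Every partition of n (length <= n,
   parts <= n) is represented exactly once, since [to_seq] is injective. *)
Definition bseq (n : nat) : finType := {k : 'I_n.+1 & k.-tuple 'I_n.+1}.

Definition to_seq (n : nat) (t : bseq n) : seq nat := map val (tagged t).

Definition npart (n : nat) (P : seq nat -> bool) : nat :=
  #|[pred t : bseq n | is_partition n (to_seq t) && P (to_seq t)]|.

Definition inO (r u : nat) (s : seq nat) : bool :=
  let D := undup [seq x <- s | r %| x] in
  (size D == 1) && (count_mem (head 0 D) s == u).

Definition inD (r u : nat) (s : seq nat) : bool :=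
  undup [seq x <- s | r <= count_mem x s] == [:: u].

Definition alpha (r u n : nat) : nat := npart n (inO r u).
Definition beta (r u n : nat) : nat := npart n (inD r u).

From Pilot Require Import Defs.
From mathcomp Require Import all_boot.
Set Implicit Arguments. Unset Strict Implicit. Unset Printing Implicit Defensive.

(* Write a positive integer as b * r ^ j with r not dividing b.  Glaisher's
   bijection matches partitions with no part divisible by r and partitions in
   which every part occurs fewer than r times: the c copies of a part b become
   d_j copies of b * r ^ j, where the d_j are the base-r digits of c, and
   conversely a part b * r ^ j splits into r ^ j copies of b.  A partition in
   O_u(n;r,1) is a partition with no part divisible by r plus u copies of a
   part r * m (m > 0), and one in D_u(n;r,1) is a partition with all
   multiplicities below r plus r * m further copies of u (m is the quotient by
   r of the multiplicity of u).  Applying Glaisher's bijection to the first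
   component and keeping m gives mutually inverse maps between the two sets. *)

Definition of_seq (n : nat) (s : seq nat) : Defs.bseq n :=
  Tagged (fun k : 'I_n.+1 => k.-tuple 'I_n.+1)
    [tuple (inord (nth 0 s i) : 'I_n.+1) | i < inord (size s)].

Lemma of_seqK n s : size s <= n -> all (fun x => x <= n) s -> to_seq (of_seq n s) = s.
Proof.
move=> size_s le_s; rewrite /to_seq /= -map_comp.
have size_k : (inord (size s) : 'I_n.+1) = size s :> nat by rewrite inordK.
rewrite -[RHS](mkseq_nth 0) /mkseq -[in RHS]size_k -val_enum_ord -map_comp.
apply: eq_map => i /=; rewrite inordK // ltnS; apply: (allP le_s); apply: mem_nth.
by rewrite -[X in _ < X]size_k.
Qed.

Lemma to_seq_inj n : injective (@to_seq n).
Proof.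
move=> [k1 w1] [k2 w2]; rewrite /to_seq /= => eq_w.
have eq_k : k1 = k2.
  by apply: ord_inj; rewrite -(size_tuple w1) -(size_tuple w2) -!(size_map val) eq_w.
by subst k2; rewrite (val_inj (inj_map val_inj eq_w)).
Qed.

Lemma leq_sumn (s : seq nat) x : x \in s -> x <= sumn s.
Proof.
elim: s => //= y s IH; rewrite inE => /predU1P[->|/IH le_x]; first exact: leq_addr.
by rewrite (leq_trans le_x) ?leq_addl.
Qed.

Lemma partition_bounds n s : is_partition n s -> size s <= n /\ all (fun x => x <= n) s.
Proof.
case/and3P=> _ pos_s /eqP <-; split; last by apply/allP => x; apply: leq_sumn.
by elim: s pos_s => //= x s IH /andP[x_gt0 /IH]; rewrite -add1n; apply: leq_add.
Qed.

Lemma npart_le n (P Q : seq nat -> bool) (f g : seq nat -> seq nat) :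
    (forall s, is_partition n s -> P s -> is_partition n (f s) && Q (f s)) ->
    (forall s, is_partition n s -> P s -> g (f s) = s) ->
  npart n P <= npart n Q.
Proof.
move=> fPQ fK; rewrite /npart.
set A := [pred t | _ && P _]; set B := [pred t | _ && Q _].
pose h (t : Defs.bseq n) := of_seq n (f (to_seq t)).
have to_seq_h t : t \in A -> to_seq (h t) = f (to_seq t).
  case/andP=> /fPQ/[apply]/andP[/partition_bounds[size_ft le_ft] _]; exact: of_seqK.
rewrite -(card_in_image (f := h)); last first.
  move=> t1 t2 A_t1 A_t2 eq_h; apply: to_seq_inj.
  case/andP: (A_t1) (A_t2) => [p1 P1] /andP[p2 P2].
  by rewrite -(fK _ p1 P1) -(fK _ p2 P2) -!to_seq_h // eq_h.
apply/subset_leq_card/subsetP => _ /imageP[t A_t ->].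
by rewrite inE to_seq_h //; case/andP: A_t => /fPQ; apply.
Qed.

Lemma perm_count_memP (s1 s2 : seq nat) :
  reflect (forall x, count_mem x s1 = count_mem x s2) (perm_eq s1 s2).
Proof.
apply: (iffP idP) => [/permP eq_c x | eq_c]; first exact: eq_c.
by apply/allP => x _; rewrite /= eq_c.
Qed.

Lemma sort_geqP (s1 s2 : seq nat) : reflect (sort geq s1 = sort geq s2) (perm_eq s1 s2).
Proof.
apply: perm_sortP => [x y | y x z le_yx le_zy | x y le_xy]; first exact: leq_total.
  exact: leq_trans le_yx.
by apply: anti_leq; rewrite andbC.
Qed.

Lemma perm_sort_geq (s l : seq nat) : sorted geq s -> perm_eq l s -> sort geq l = s.
Proof.
move=> sorted_s /sort_geqP ->; apply: sorted_sort sorted_s.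
by move=> y x z le_yx le_zy; apply: leq_trans le_yx.
Qed.

Lemma is_partition_sort n s :
  is_partition n (sort geq s) = all (fun x => 0 < x) s && (sumn s == n).
Proof.
rewrite /is_partition sort_sorted /=; last by move=> x y; apply: leq_total.
by rewrite (perm_all _ (permEl (perm_sort geq s))) (perm_sumn (permEl (perm_sort geq s))).
Qed.

Lemma count_sort_cat_nseq (s : seq nat) k y x :
  count_mem x (sort geq (s ++ nseq k y)) = count_mem x s + (x == y) * k.
Proof. by rewrite count_sort count_cat count_nseq eq_sym. Qed.

Lemma sumn_sort_cat_nseq (s : seq nat) k y : sumn (sort geq (s ++ nseq k y)) = sumn s + y * k.
Proof. by rewrite (perm_sumn (permEl (perm_sort geq _))) sumn_cat sumn_nseq. Qed.

Lemma count_mem_gt0 (s : seq nat) x : (0 < count_mem x s) = (x \in s).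
Proof. by rewrite -has_count has_pred1. Qed.

Lemma count_mem_filter (p : pred nat) x s :
  count_mem x (filter p s) = if p x then count_mem x s else 0.
Proof.
rewrite count_filter; case: ifP => p_x.
  by apply: eq_count => y /=; case: eqP => // ->; rewrite p_x.
by rewrite -(count_pred0 s); apply: eq_count => y /=; case: eqP => // ->; rewrite p_x.
Qed.

Lemma undup_eq1 (s : seq nat) w : (undup s == [:: w]) = (w \in s) && all (pred1 w) s.
Proof.
apply/eqP/andP => [eq_s | [w_s /all_pred1P eq_s]].
  split; first by rewrite -mem_undup eq_s inE.
  by apply/allP => y; rewrite -mem_undup eq_s inE.
rewrite eq_s; move: w_s; rewrite eq_s; case: (size s) => [|n] //= _.
by elim: n => //= n IH; rewrite inE eqxx.
Qed.

Lemma count_mem_mul_leq_sumn (s : seq nat) x : count_mem x s * x <= sumn s.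
Proof.
elim: s => //= y s IH; rewrite mulnDl; case: eqP => [->|_]; first by rewrite mul1n leq_add2l.
by rewrite mul0n add0n (leq_trans IH) ?leq_addl.
Qed.

Lemma all_gt0_count0 (s : seq nat) : all (fun x => 0 < x) s = (count_mem 0 s == 0).
Proof. by elim: s => //= x s ->; case: x. Qed.

Lemma count_flatten_nseq_iota (f : nat -> nat) a N x :
  count_mem x (flatten [seq nseq (f k) k | k <- iota a N]) = (a <= x < a + N) * f x.
Proof.
elim: N a => [|N IH] a /=; first by rewrite addn0 ltnNge andbN mul0n.
rewrite count_cat count_nseq IH addnS -addSn /=; case: (eqVneq a x) => [-> | ne_ax].
  by rewrite leqnn ltnn leq_addr /= mul1n addn0.
by rewrite ltn_neqAle ne_ax mul0n.
Qed.

(** * Glaisher's bijection *)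

Section Glaisher.
Variable r : nat.
Hypothesis r_gt1 : 1 < r.

Let r_gt0 : 0 < r. Proof. exact: ltnW. Qed.

Definition rval (k : nat) : nat := [arg max_(i > (ord0 : 'I_k.+1) | r ^ i %| k) i].
Definition rcore (k : nat) : nat := k %/ r ^ rval k.

Lemma rcore_spec k : 0 < k -> k = rcore k * r ^ rval k /\ ~~ (r %| rcore k).
Proof.
move=> k_gt0; rewrite /rcore /rval; case: arg_maxnP => // -[i lt_ik] /= dvd_k i_max.
split; first exact: esym (divnK dvd_k).
apply/negP; rewrite (dvdn_divRL _ dvd_k) -expnS => dvd_k'.
have lt_i1 : i.+1 < k.+1 := ltnW (leq_trans (ltn_expl _ r_gt1) (dvdn_leq k_gt0 dvd_k')).
by have := i_max (Ordinal lt_i1) dvd_k'; rewrite ltnn.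
Qed.

Lemma ndvdn_gt0 b : ~~ (r %| b) -> 0 < b.
Proof. by rewrite lt0n; apply: contraNneq => ->. Qed.

Lemma rpow_decomp_inj b c i j :
  ~~ (r %| b) -> ~~ (r %| c) -> b * r ^ i = c * r ^ j -> i = j.
Proof.
wlog le_ij : b c i j / i <= j => [hwlog ndvd_b ndvd_c eq_bc | ndvd_b ndvd_c].
  case: (leqP i j) => [le_ij | /ltnW le_ji]; first exact: (hwlog b c i j).
  by symmetry; apply: (hwlog c b).
move=> eq_bc; have eq_b : b = c * r ^ (j - i).
  apply/eqP; rewrite -(@eqn_pmul2r (r ^ i)) ?expn_gt0 ?r_gt0 //.
  by rewrite eq_bc -mulnA -expnD subnK.
move: ndvd_b; rewrite eq_b; case: (posnP (j - i)) => [/eqP ji0 _ | /prednK <-].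
  by apply/anti_leq; rewrite le_ij -subn_eq0 ji0.
by rewrite expnS mulnCA dvdn_mulr.
Qed.

Lemma rval_rcore_pow b i : ~~ (r %| b) -> rval (b * r ^ i) = i /\ rcore (b * r ^ i) = b.
Proof.
move=> ndvd_b; have k_gt0 : 0 < b * r ^ i by rewrite muln_gt0 ndvdn_gt0 // expn_gt0 r_gt0.
have [eq_k ndvd_c] := rcore_spec k_gt0.
have eq_v := rpow_decomp_inj ndvd_c ndvd_b (esym eq_k).
split=> //; move: (esym eq_k); rewrite eq_v => /eqP.
by rewrite eqn_pmul2r ?expn_gt0 ?r_gt0 // => /eqP.
Qed.

Definition digit (i c : nat) : nat := c %/ r ^ i %% r.

Lemma digit_lt i c : digit i c < r.
Proof. exact: ltn_pmod. Qed.

Lemma digitS i c : digit i.+1 c = digit i (c %/ r).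
Proof. by rewrite /digit expnS divnMA. Qed.

Lemma big_ord_radix_recl K (a : nat -> nat) :
  \sum_(j < K.+1) a j * r ^ j = a 0 + r * \sum_(j < K) a j.+1 * r ^ j.
Proof.
rewrite big_ord_recl expn0 muln1 big_distrr; congr (_ + _).
by apply: eq_bigr => j _; rewrite /= expnS mulnCA.
Qed.

Lemma sum_digits K c : c < r ^ K -> \sum_(j < K) digit j c * r ^ j = c.
Proof.
elim: K c => [|K IH] c lt_c.
  by rewrite big_ord0; move: lt_c; rewrite expn0 ltnS leqn0 => /eqP.
rewrite (big_ord_radix_recl K (digit^~ c)).
under eq_bigr => j _ do rewrite digitS.
rewrite IH; last by rewrite ltn_divLR // -expnSr.
by rewrite /digit expn0 divn1 addnC mulnC -divn_eq.
Qed.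

Lemma digit_sum K (a : nat -> nat) i :
  (forall j, a j < r) -> i < K -> digit i (\sum_(j < K) a j * r ^ j) = a i.
Proof.
elim: K a i => [//|K IH] a i lt_a lt_iK; rewrite big_ord_radix_recl.
case: i lt_iK => [_|i lt_iK].
  by rewrite /digit expn0 divn1 addnC mulnC modnMDl modn_small.
rewrite digitS addnC mulnC divnMDl // divn_small // addn0; exact: (IH (fun j => a j.+1)).
Qed.

Definition split_parts (t : seq nat) : seq nat :=
  flatten [seq nseq (r ^ rval k) (rcore k) | k <- t].

Definition merge_parts (s : seq nat) : seq nat :=
  flatten [seq nseq (digit (rval k) (count_mem (rcore k) s)) k | k <- iota 1 (sumn s)].

Definition ndiv_parts (s : seq nat) : bool := all (fun x => ~~ (r %| x)) s.

Definition small_mults (t : seq nat) : Prop :=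
  all (fun x => 0 < x) t /\ forall x, count_mem x t < r.

Lemma ndiv_parts_count s x : ndiv_parts s -> r %| x -> count_mem x s = 0.
Proof. by move=> ndiv_s dvd_x; apply/count_memPn; apply: contraL dvd_x; apply: (allP ndiv_s). Qed.

Lemma ndiv_parts_gt0 s : ndiv_parts s -> all (fun x => 0 < x) s.
Proof. by move=> ndiv_s; apply/allP => x /(allP ndiv_s); apply: ndvdn_gt0. Qed.

Lemma mem_ltn_rpow_sumn (t : seq nat) k : k \in t -> k < r ^ sumn t.
Proof. by move=> k_t; apply: leq_ltn_trans (leq_sumn k_t) (ltn_expl _ r_gt1). Qed.

Lemma sum_indicator_rpow K x k : ~~ (r %| x) -> 0 < k < r ^ K ->
  \sum_(j < K) (k == x * r ^ j) * r ^ j = (rcore k == x) * r ^ rval k.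
Proof.
move=> ndvd_x /andP[k_gt0 lt_kK]; have [eq_k ndvd_c] := rcore_spec k_gt0.
have eq_kx j : (k == x * r ^ j) = (rcore k == x) && (j == rval k).
  apply/eqP/andP => [-> | [/eqP <- /eqP ->] //].
  by have [-> ->] := rval_rcore_pow j ndvd_x.
have lt_vK : rval k < K.
  rewrite -(ltn_exp2l _ _ r_gt1) (leq_ltn_trans _ lt_kK) // {2}eq_k leq_pmull //.
  exact: ndvdn_gt0.
rewrite (eq_bigr (fun j : 'I_K => if (rcore k == x) && (j == rval k :> nat) then r ^ j else 0)).
  by rewrite -big_mkcond (big_ord1_cond_eq _ (expn r) (fun=> rcore k == x)) lt_vK mulnbl.
by move=> j _; rewrite eq_kx mulnbl.
Qed.

Lemma count_split_parts_ndiv x K t : ~~ (r %| x) -> all (fun k => 0 < k < r ^ K) t ->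
  count_mem x (split_parts t) = \sum_(j < K) count_mem (x * r ^ j) t * r ^ j.
Proof.
move=> ndvd_x; rewrite count_flatten -map_comp; elim: t => [|k t IH] /=; first by rewrite big1.
case/andP=> bnd_k /IH ->; rewrite count_nseq -(sum_indicator_rpow ndvd_x bnd_k) -big_split /=.
by apply: eq_bigr => j _; rewrite mulnDl.
Qed.

Lemma split_parts_ndiv t : all (fun k => 0 < k) t -> ndiv_parts (split_parts t).
Proof.
move=> pos_t; apply/allP => x /flatten_mapP[k k_t]; rewrite mem_nseq => /andP[_ /eqP ->].
exact: (rcore_spec (allP pos_t k k_t)).2.
Qed.

Lemma sumn_split_parts t : all (fun k => 0 < k) t -> sumn (split_parts t) = sumn t.
Proof.
rewrite /split_parts sumn_flatten -map_comp; elim: t => //= k t IH /andP[k_gt0 /IH ->].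
by rewrite sumn_nseq -(rcore_spec k_gt0).1.
Qed.

Lemma perm_split_parts t1 t2 : perm_eq t1 t2 -> perm_eq (split_parts t1) (split_parts t2).
Proof. by move=> perm_t; apply/perm_flatten/perm_map. Qed.

Lemma count_merge_parts x s : 0 < x ->
  count_mem x (merge_parts s) = digit (rval x) (count_mem (rcore x) s).
Proof.
move=> x_gt0; rewrite count_flatten_nseq_iota x_gt0 add1n ltnS /=.
case: leqP => [_ | lt_s_x]; first by rewrite mul1n.
have [eq_x ndvd_c] := rcore_spec x_gt0.
rewrite /digit divn_small ?mod0n // -(ltn_pmul2r (ndvdn_gt0 ndvd_c)).
by rewrite [r ^ _ * _]mulnC -eq_x (leq_ltn_trans (count_mem_mul_leq_sumn _ _) lt_s_x).
Qed.

Lemma merge_parts_small s : small_mults (merge_parts s).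
Proof.
split; first by rewrite all_gt0_count0 count_flatten_nseq_iota.
case=> [|x]; last by rewrite count_merge_parts // digit_lt.
by rewrite count_flatten_nseq_iota.
Qed.

Lemma perm_merge_parts s1 s2 : perm_eq s1 s2 -> merge_parts s1 = merge_parts s2.
Proof.
move=> perm_s; rewrite /merge_parts (perm_sumn perm_s); congr flatten.
by apply: eq_map => k; rewrite (permP perm_s).
Qed.

Lemma split_merge_parts s : ndiv_parts s -> perm_eq (split_parts (merge_parts s)) s.
Proof.
move=> ndiv_s; apply/perm_count_memP => x; case: (boolP (r %| x)) => [dvd_x | ndvd_x].
  by rewrite !ndiv_parts_count ?split_parts_ndiv //; case: (merge_parts_small s).
have x_gt0 := ndvdn_gt0 ndvd_x.
rewrite (@count_split_parts_ndiv _ (sumn s)) //; last first.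
  apply/allP => k /flatten_mapP[m]; rewrite mem_iota add1n ltnS => /andP[m_gt0 le_ms].
  rewrite mem_nseq => /andP[_ /eqP ->]; rewrite m_gt0.
  exact: leq_ltn_trans le_ms (ltn_expl _ r_gt1).
under eq_bigr => j _ do rewrite count_merge_parts ?muln_gt0 ?x_gt0 ?expn_gt0 ?r_gt0 //
  (rval_rcore_pow j ndvd_x).1 (rval_rcore_pow j ndvd_x).2.
rewrite sum_digits //; apply: leq_ltn_trans (ltn_expl _ r_gt1).
by apply: leq_trans (count_mem_mul_leq_sumn s x); rewrite leq_pmulr.
Qed.

Lemma merge_split_parts t : small_mults t -> perm_eq (merge_parts (split_parts t)) t.
Proof.
case=> pos_t lt_t; apply/perm_count_memP => -[|x].
  move: pos_t (merge_parts_small (split_parts t)).1; rewrite !all_gt0_count0.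
  by move=> /eqP -> /eqP ->.
have [eq_x ndvd_c] := rcore_spec (ltn0Sn x).
rewrite count_merge_parts // (@count_split_parts_ndiv _ (x.+1 + sumn t)) //; last first.
  apply/allP => k k_t; rewrite (allP pos_t) //=.
  by apply: leq_trans (mem_ltn_rpow_sumn k_t) _; rewrite leq_pexp2l ?r_gt0 ?leq_addl.
rewrite (digit_sum (a := fun j => count_mem (rcore x.+1 * r ^ j) t)) // -?eq_x //.
apply: leq_trans (ltn_expl _ r_gt1) _.
by apply: leq_trans (leq_addr _ _); rewrite {2}eq_x leq_pmull ?ndvdn_gt0.
Qed.

Lemma sumn_merge_parts s : ndiv_parts s -> sumn (merge_parts s) = sumn s.
Proof.
move=> ndiv_s; rewrite -(sumn_split_parts (merge_parts_small s).1).
exact: perm_sumn (split_merge_parts ndiv_s).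
Qed.

End Glaisher.

(** * Splitting off the distinguished part *)

Section MultipleParts.
Variables r u : nat.
Hypotheses (r_gt1 : 1 < r) (u_gt0 : 0 < u).

Let r_gt0 : 0 < r. Proof. exact: ltnW. Qed.

Definition opart (s : seq nat) : nat := head 0 (undup [seq x <- s | r %| x]).
Definition orest (s : seq nat) : seq nat := [seq x <- s | ~~ (r %| x)].
Definition oquot (s : seq nat) : nat := opart s %/ r.
Definition ojoin (s : seq nat) (m : nat) : seq nat := sort geq (s ++ nseq u (r * m)).

Definition drest (t : seq nat) : seq nat :=
  [seq x <- t | x != u] ++ nseq (count_mem u t %% r) u.
Definition dquot (t : seq nat) : nat := count_mem u t %/ r.
Definition djoin (t : seq nat) (m : nat) : seq nat := sort geq (t ++ nseq (r * m) u).

Lemma inO_spec s : inO r u s ->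
  [/\ r %| opart s, count_mem (opart s) s = u
    & forall x, r %| x -> x != opart s -> count_mem x s = 0].
Proof.
rewrite /inO -/(opart s); case/andP => /eqP size1 /eqP count_w.
have /eqP : undup [seq x <- s | r %| x] = [:: opart s].
  by rewrite /opart; case: (undup _) size1 => [|a [|b l]].
rewrite undup_eq1 mem_filter => /andP[/andP[dvd_w _] /allP only_w]; split=> // x dvd_x ne_xw.
apply/count_memPn; apply: contra ne_xw => x_s.
by have := only_w x; rewrite mem_filter dvd_x x_s => /(_ isT).
Qed.

Lemma inO_intro s w : r %| w -> count_mem w s = u ->
  (forall x, r %| x -> x != w -> count_mem x s = 0) -> inO r u s.
Proof.
move=> dvd_w count_w only_w; rewrite /inO.
have -> : undup [seq x <- s | r %| x] = [:: w].
  apply/eqP; rewrite undup_eq1 mem_filter dvd_w -count_mem_gt0 count_w u_gt0 /=.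
  apply/allP => x; rewrite mem_filter => /andP[dvd_x x_s] /=; apply: contraLR x_s => ne_xw.
  by rewrite -count_mem_gt0 only_w.
by rewrite /= count_w !eqxx.
Qed.

Lemma inD_spec s : inD r u s <-> r <= count_mem u s /\ forall x, x != u -> count_mem x s < r.
Proof.
rewrite /inD undup_eq1 mem_filter; split.
  case/andP=> /andP[le_ru _] /allP only_u; split=> // x ne_xu; rewrite ltnNge.
  apply: contra ne_xu => le_rx; apply: (only_u x).
  by rewrite mem_filter le_rx -count_mem_gt0 (leq_trans r_gt0).
case=> le_ru lt_r; rewrite le_ru -count_mem_gt0 (leq_trans r_gt0 le_ru) /=.
apply/allP => x; rewrite mem_filter => /andP[le_rx _] /=; apply: contraLR le_rx => ne_xu.
by rewrite -ltnNge lt_r.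
Qed.

Lemma count_ojoin s m x : count_mem x (ojoin s m) = count_mem x s + (x == r * m) * u.
Proof. exact: count_sort_cat_nseq. Qed.

Lemma count_djoin t m x : count_mem x (djoin t m) = count_mem x t + (x == u) * (r * m).
Proof. exact: count_sort_cat_nseq. Qed.

Lemma perm_ojoin s1 s2 m : perm_eq s1 s2 -> ojoin s1 m = ojoin s2 m.
Proof. by move=> perm_s; apply/sort_geqP; rewrite perm_cat2r. Qed.

Lemma perm_djoin t1 t2 m : perm_eq t1 t2 -> djoin t1 m = djoin t2 m.
Proof. by move=> perm_t; apply/sort_geqP; rewrite perm_cat2r. Qed.

Lemma ojoin_partition s m : all (fun x => 0 < x) s -> 0 < m ->
  is_partition (sumn s + r * m * u) (ojoin s m).
Proof.
move=> pos_s m_gt0; rewrite is_partition_sort all_cat pos_s all_nseq muln_gt0 r_gt0 m_gt0 orbT.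
by rewrite sumn_cat sumn_nseq eqxx.
Qed.

Lemma djoin_partition t m : all (fun x => 0 < x) t ->
  is_partition (sumn t + r * m * u) (djoin t m).
Proof.
move=> pos_t; rewrite is_partition_sort all_cat pos_t all_nseq u_gt0 orbT.
by rewrite sumn_cat sumn_nseq mulnC eqxx.
Qed.

Lemma ojoin_inO s m : ndiv_parts r s -> inO r u (ojoin s m).
Proof.
move=> ndiv_s; apply: (@inO_intro _ (r * m)); first exact: dvdn_mulr.
  by rewrite count_ojoin (ndiv_parts_count ndiv_s) ?dvdn_mulr // eqxx mul1n.
by move=> x dvd_x ne_x; rewrite count_ojoin (ndiv_parts_count ndiv_s) // (negbTE ne_x).
Qed.

Lemma djoin_inD t m : small_mults r t -> 0 < m -> inD r u (djoin t m).
Proof.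
move=> [_ lt_t] m_gt0; apply/inD_spec; split=> [|x ne_xu].
  by rewrite count_djoin eqxx mul1n (leq_trans _ (leq_addl _ _)) // leq_pmulr.
by rewrite count_djoin (negbTE ne_xu) addn0.
Qed.

Lemma orest_ndiv s : ndiv_parts r (orest s).
Proof. exact: filter_all. Qed.

Lemma orest_ojoin s m : ndiv_parts r s -> perm_eq (orest (ojoin s m)) s.
Proof.
move=> ndiv_s; apply: perm_trans (perm_filter _ (permEl (perm_sort geq _))) _.
by rewrite filter_cat (all_filterP ndiv_s) filter_nseq /= dvdn_mulr // cats0.
Qed.

Lemma oquot_ojoin s m : ndiv_parts r s -> 0 < m -> oquot (ojoin s m) = m.
Proof.
move=> ndiv_s m_gt0; have [_ _ only_w] := inO_spec (ojoin_inO m ndiv_s).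
rewrite /oquot (_ : opart _ = r * m) ?mulKn //; apply/eqP; rewrite eq_sym; apply: contraT => ne_w.
have := only_w _ (dvdn_mulr m (dvdnn r)) ne_w.
rewrite count_ojoin (ndiv_parts_count ndiv_s) ?dvdn_mulr // eqxx mul1n add0n => u0.
by move: u_gt0; rewrite u0.
Qed.

Lemma count_drest t x :
  count_mem x (drest t) = if x == u then count_mem u t %% r else count_mem x t.
Proof.
rewrite count_cat count_mem_filter count_nseq /= eq_sym.
by case: eqP => [-> | _]; rewrite ?mul1n ?mul0n ?addn0.
Qed.

Lemma drest_djoin t m : small_mults r t -> perm_eq (drest (djoin t m)) t.
Proof.
move=> [_ lt_t]; apply/perm_count_memP => x; rewrite count_drest !count_djoin.
case: eqP => [-> | _]; first by rewrite eqxx mul1n addnC mulnC modnMDl modn_small.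
by rewrite mul0n addn0.
Qed.

Lemma dquot_djoin t m : small_mults r t -> dquot (djoin t m) = m.
Proof.
by move=> [_ lt_t]; rewrite /dquot count_djoin eqxx mul1n mulnC divnDMl // divn_small.
Qed.

Lemma ojoin_orest s : sorted geq s -> inO r u s -> ojoin (orest s) (oquot s) = s.
Proof.
move=> sorted_s O_s; have [dvd_w count_w only_w] := inO_spec O_s.
rewrite /ojoin /oquot mulnC divnK //; apply: perm_sort_geq sorted_s _.
apply/perm_count_memP => x; rewrite count_cat count_mem_filter count_nseq /= eq_sym.
case: (boolP (r %| x)) => [dvd_x | ndvd_x] /=.
  case: eqVneq => [-> | ne_xw]; first by rewrite count_w add0n mul1n.
  by rewrite only_w.
by rewrite (_ : x == _ = false) ?addn0 //; apply: contraNF ndvd_x => /eqP ->.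
Qed.

Lemma djoin_drest t : sorted geq t -> djoin (drest t) (dquot t) = t.
Proof.
move=> sorted_t; apply: perm_sort_geq sorted_t _.
apply/perm_count_memP => x; rewrite count_cat count_drest count_nseq /= eq_sym.
case: (eqVneq x u) => [-> | _]; rewrite ?eqxx ?mul1n ?mul0n ?addn0 //.
by rewrite /dquot addnC mulnC -divn_eq.
Qed.

Lemma oquot_gt0 s : all (fun x => 0 < x) s -> inO r u s -> 0 < oquot s.
Proof.
move=> pos_s /inO_spec[dvd_w count_w _].
have w_s : opart s \in s by rewrite -count_mem_gt0 count_w.
by rewrite divn_gt0 // dvdn_leq // (allP pos_s).
Qed.

Lemma dquot_gt0 t : inD r u t -> 0 < dquot t.
Proof. by case/inD_spec=> le_ru _; rewrite divn_gt0. Qed.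

Lemma drest_small t : all (fun x => 0 < x) t -> inD r u t -> small_mults r (drest t).
Proof.
move=> pos_t /inD_spec[_ lt_r]; split.
  rewrite all_cat all_nseq u_gt0 orbT andbT; apply/allP => x.
  by rewrite mem_filter => /andP[_ /(allP pos_t)].
by move=> x; rewrite count_drest; case: eqP => [_ | /eqP /lt_r //]; rewrite ltn_pmod.
Qed.

Definition o_to_d (s : seq nat) : seq nat := djoin (merge_parts r (orest s)) (oquot s).
Definition d_to_o (t : seq nat) : seq nat := ojoin (split_parts r (drest t)) (dquot t).

Lemma o_to_d_partition n s : is_partition n s -> inO r u s ->
  is_partition n (o_to_d s) && inD r u (o_to_d s).
Proof.
case/and3P=> sorted_s pos_s /eqP <- O_s; have small_M := merge_parts_small r_gt1 (orest s).
rewrite djoin_inD ?oquot_gt0 // andbT.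
rewrite -[X in is_partition (sumn X)](ojoin_orest sorted_s O_s) /ojoin sumn_sort_cat_nseq.
by rewrite -(sumn_merge_parts r_gt1 (orest_ndiv s)) djoin_partition ?small_M.1.
Qed.

Lemma d_to_o_partition n t : is_partition n t -> inD r u t ->
  is_partition n (d_to_o t) && inO r u (d_to_o t).
Proof.
case/and3P=> sorted_t pos_t /eqP <- D_t; have [pos_t' _] := drest_small pos_t D_t.
have ndiv_S := split_parts_ndiv r_gt1 pos_t'.
rewrite ojoin_inO // andbT.
rewrite -[X in is_partition (sumn X)](djoin_drest sorted_t) /djoin sumn_sort_cat_nseq.
rewrite -(sumn_split_parts r_gt1 pos_t') mulnC.
by rewrite ojoin_partition ?dquot_gt0 // (ndiv_parts_gt0 ndiv_S).
Qed.

Lemma o_to_dK s : sorted geq s -> inO r u s -> d_to_o (o_to_d s) = s.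
Proof.
move=> sorted_s O_s; have small_M := merge_parts_small r_gt1 (orest s).
rewrite /d_to_o /o_to_d dquot_djoin //.
rewrite (perm_ojoin _ (perm_split_parts r (drest_djoin _ small_M))).
by rewrite (perm_ojoin _ (split_merge_parts r_gt1 (orest_ndiv s))) ojoin_orest.
Qed.

Lemma d_to_oK t : all (fun x => 0 < x) t -> sorted geq t -> inD r u t -> o_to_d (d_to_o t) = t.
Proof.
move=> pos_t sorted_t D_t; have small_t' := drest_small pos_t D_t.
have ndiv_S := split_parts_ndiv r_gt1 small_t'.1.
rewrite /o_to_d /d_to_o oquot_ojoin ?dquot_gt0 // (perm_merge_parts _ (orest_ojoin _ ndiv_S)).
by rewrite (perm_djoin _ (merge_split_parts r_gt1 small_t')) djoin_drest.
Qed.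

End MultipleParts.

Theorem theorem1 (u r n : nat) (hu : 1 <= u) (hr : 2 <= r) :
  alpha r u n = beta r u n.
Proof.
apply/eqP; rewrite eqn_leq; apply/andP; split.
  apply: npart_le (o_to_d_partition hr hu (n := n)) _ => s /and3P[sorted_s _ _].
  exact: o_to_dK.
apply: npart_le (d_to_o_partition hr hu (n := n)) _ => t /and3P[sorted_t pos_t _].
exact: d_to_oK.
Qed.
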